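(* Let $a>1$. Then, as $t\to-\infty$, $$f(t,a)\sim\left(-\frac{\pi t}{2}\right)^{1/2}a^{-t}\,\mathrm{erfi}\!\left[-(1+\ln a)\sqrt{-t/2}\right]\exp\!\left(\frac{t(1+\ln a)^{2}}{2}\right),$$ where $f(t,a)=t\int_0^1(ax)^{-tx}\,dx$. In particular $|f(t,a)|$ grows exponentially as $t\to-\infty$.
   Context: For real $a>0$ and real $t$, $f(t,a)=t\int_0^1 (ax)^{-tx}\,dx$, where $(ax)^{-tx}=\exp(-tx\ln(ax))$ for $x\in(0,1]$. $\mathrm{erfi}(x)=\frac{2}{\sqrt\pi}\int_0^x e^{z^2}\,dz$ is the imaginary error function. The notation $g\sim h$ means $g/h\to1$. *)

From Stdlib Require Import Reals.
From Coquelicot Require Import Coquelicot.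
Open Scope R_scope.

(* (a x)^(-t x) := exp(-t x ln(a x)) for x in (0,1]; the value at x = 0 is
   irrelevant for the Riemann integral. *)
Definition integrand (t a x : R) : R := exp (- t * x * ln (a * x)).

Definition fta (t a : R) : R := t * RInt (fun x => integrand t a x) 0 1.

Definition erfi (x : R) : R := 2 / sqrt PI * RInt (fun z => exp (z ^ 2)) 0 x.

Definition approx (t a : R) : R :=
  sqrt (- PI * t / 2) * Rpower a (- t)
  * erfi (- (1 + ln a) * sqrt (- t / 2))
  * exp (t * (1 + ln a) ^ 2 / 2).

(* With s = -t, L = ln a and b = 1 + L, the elementary bounds
   x - 1 <= x ln x <= x (x - 1) squeeze the integrand (a x)^(-t x) between
   e^(sL) e^(-s b (1-x)) and e^(sL) k(x), where k(x) = e^(-s (b (1-x) - (1-x)^2)).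
   Both bounds integrate to e^(sL) / (s b) * (1 + O(1/s)): the first one
   explicitly, the second because s (b - 2 (1-x)) k is an exact derivative and
   the correction term int (1-x) k is O(1/s^2).  The substitution z = -y x turns
   the erfi factor of the approximant into the same kernel integral, with
   b = 2 and s replaced by b^2 s / 2 (Dawson's integral).  Hence f(t,a) and the
   approximant are both -e^(sL)/b * (1 + O(1/s)), so their ratio tends to 1 and
   |f(t,a)| >= e^(sL) / (2b) for t small enough. *)

From Stdlib Require Import Reals Psatz.
From Coquelicot Require Import Coquelicot.
Open Scope R_scope.

Ltac ex_RInt_by_smoothness :=
  apply (@ex_RInt_continuous R_CompleteNormedModule); intros;
  apply (@ex_derive_continuous R_AbsRing R_NormedModule); auto_derive; auto.

Ltac unify_exp_args :=
  repeat match goal with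
  | |- context [exp ?u] => match goal with
    | |- context [exp ?v] => tryif constr_eq u v then fail else replace u with v by ring
    end
  end.

Lemma exp_le_exp_of_le x y : x <= y -> exp x <= exp y.
Proof. now intros [h | ->]; [left; apply exp_increasing | right]. Qed.

Lemma ln_pos x : 1 < x -> 0 < ln x.
Proof. intros hx. rewrite <- ln_1. apply ln_increasing; lra. Qed.

Lemma ln_le_sub1 x : 0 < x -> ln x <= x - 1.
Proof. intros hx. pose proof (exp_ineq1_le (ln x)) as h. rewrite exp_ln in h by exact hx. lra. Qed.

Lemma xlnx_ge x : 0 < x -> x - 1 <= x * ln x.
Proof.
  intros hx. pose proof (ln_le_sub1 (/ x) (Rinv_0_lt_compat x hx)) as h.
  rewrite ln_Rinv in h by exact hx.
  replace (x - 1) with (x * (1 - / x)) by (field; lra). nra.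
Qed.

Lemma xlnx_le x : 0 < x -> x * ln x <= x * (x - 1).
Proof. intros hx. pose proof (ln_le_sub1 x hx). nra. Qed.

Lemma Rabs_xlnx_le x : 0 < x <= 1 -> Rabs (x * ln x) <= 2 * sqrt x.
Proof.
  intros hx. set (r := sqrt x).
  assert (hr : 0 < r) by (apply sqrt_lt_R0; lra).
  assert (hrr : r * r = x) by (apply sqrt_sqrt; lra).
  assert (hln : x * ln x = 2 * r * (r * ln r)) by (rewrite <- hrr, ln_mult by lra; ring).
  pose proof (xlnx_ge r hr). pose proof (xlnx_le x (proj1 hx)).
  apply Rabs_le. nra.
Qed.

Lemma Rdiv_div_common x y z : z <> 0 -> x / z / (y / z) = x / y.
Proof.
  intros hz. unfold Rdiv. rewrite Rinv_mult, Rinv_inv.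
  transitivity (x * / y * (z * / z)); [ring|]. rewrite Rinv_r by exact hz. ring.
Qed.

Lemma Rabs_half_le_of_div_near_1 x y : y <> 0 -> Rabs (x / y - 1) < 1 / 2 -> Rabs y / 2 <= Rabs x.
Proof.
  intros hy h. apply Rabs_lt_between' in h.
  replace x with (y * (x / y)) by (field; exact hy).
  rewrite Rabs_mult, (Rabs_right (x / y)) by lra.
  pose proof (Rabs_pos y). nra.
Qed.

Lemma is_lim_m_infty_of_rate (f : R -> R) (l C : R) :
  (forall t, t < 0 -> Rabs (f t - l) <= C / - t) -> is_lim f m_infty l.
Proof.
  intros hf. apply is_lim_spec. intros eps. pose proof (cond_pos eps) as he.
  assert (hC : 0 <= Rabs C / eps) by (apply Rle_div_r; [lra | rewrite Rmult_0_l; apply Rabs_pos]).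
  exists (- (Rabs C / eps) - 1). intros t ht.
  eapply Rle_lt_trans; [apply hf; lra|].
  apply Rlt_div_l; [lra|].
  assert (hCt : Rabs C / eps < - t) by lra. apply Rlt_div_l in hCt; [| exact he].
  pose proof (Rle_abs C). lra.
Qed.

Lemma continuous_xlnax_0 a : 0 < a -> continuous (fun x => x * ln (a * x)) 0.
Proof.
  intros ha. set (C := Rabs (ln a) + 2).
  assert (hC : 0 <= C) by (unfold C; pose proof (Rabs_pos (ln a)); lra).
  assert (hroot : continuous (fun x => C * sqrt (Rabs x)) 0).
  { apply (@continuous_mult R_UniformSpace R_AbsRing); [apply continuous_const|].
    apply continuous_sqrt_comp, continuous_Rabs. }
  unfold continuous in *. rewrite Rmult_0_l.
  rewrite Rabs_R0, sqrt_0, Rmult_0_r in hroot.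
  change (filterlim (fun x => x * ln (a * x)) (locally 0) (Rbar_locally 0)).
  apply (filterlim_le_le (fun x => - (C * sqrt (Rabs x))) _ (fun x => C * sqrt (Rabs x))).
  - exists (mkposreal 1 Rlt_0_1). intros x hx. change R in x. apply Rabs_le_between.
    change (Rabs (x - 0) < 1) in hx. rewrite Rminus_0_r in hx.
    destruct (Rle_lt_dec x 0) as [hx0 | hx0].
    + (* [ln] is 0 on nonpositive reals *)
      unfold ln. destruct (Rlt_dec 0 (a * x)); [exfalso; nra|].
      rewrite Rmult_0_r, Rabs_R0. apply Rmult_le_pos; [exact hC | apply sqrt_pos].
    + rewrite (Rabs_right x) in hx |- * by lra. rewrite ln_mult, Rmult_plus_distr_l by lra.
      assert (hxr : x <= sqrt x).
      { rewrite <- (sqrt_sqrt x) at 1 by lra.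
        pose proof (sqrt_pos x). pose proof (sqrt_le_1_alt x 1 ltac:(lra)) as h1.
        rewrite sqrt_1 in h1. nra. }
      assert (Rabs (x * ln a) <= Rabs (ln a) * sqrt x).
      { rewrite Rabs_mult, (Rabs_right x), Rmult_comm by lra.
        apply Rmult_le_compat_l; [apply Rabs_pos | exact hxr]. }
      eapply Rle_trans; [apply Rabs_triang|].
      pose proof (Rabs_xlnx_le x ltac:(lra)). unfold C. lra.
  - apply (filterlim_comp _ _ _ _ Ropp (locally 0) (locally 0) _ hroot).
    rewrite <- Ropp_0 at 2. apply (filterlim_opp (K := R_AbsRing) (V := R_NormedModule) 0).
  - exact hroot.
Qed.

Lemma RInt_mult_l (c : R) (f : R -> R) (a b : R) :
  ex_RInt f a b -> RInt (fun x => c * f x) a b = c * RInt f a b.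
Proof. exact (RInt_scal (V := R_CompleteNormedModule) f a b c). Qed.

Lemma RInt_minus_R (f g : R -> R) (a b : R) : ex_RInt f a b -> ex_RInt g a b ->
  RInt (fun x => f x - g x) a b = RInt f a b - RInt g a b.
Proof. exact (RInt_minus (V := R_CompleteNormedModule) f g a b). Qed.

Lemma RInt_exp_lin c : c <> 0 -> RInt (fun x => exp (- c * (1 - x))) 0 1 = (1 - exp (- c)) / c.
Proof.
  intros hc.
  rewrite (is_RInt_unique _ _ _ _ (@is_RInt_derive R_CompleteNormedModule
             (fun x => exp (- c * (1 - x)) / c) (fun x => exp (- c * (1 - x))) 0 1
             ltac:(intros; auto_derive; [auto | unify_exp_args; field; exact hc])
             ltac:(intros; apply (@ex_derive_continuous R_AbsRing R_NormedModule); auto_derive; auto))).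
  unfold minus, plus, opp; simpl. rewrite Rminus_diag, Rmult_0_r, exp_0, Rminus_0_r, Rmult_1_r.
  field. exact hc.
Qed.

Lemma RInt_exp_lin_ge c : 0 < c -> 1 - / c <= c * RInt (fun x => exp (- c * (1 - x))) 0 1.
Proof.
  intros hc. rewrite RInt_exp_lin by lra.
  assert (exp (- c) <= / c).
  { rewrite exp_Ropp. apply Rinv_le_contravar; [exact hc|]. pose proof (exp_ineq1_le c). lra. }
  replace (c * ((1 - exp (- c)) / c)) with (1 - exp (- c)) by (field; lra). lra.
Qed.

Lemma RInt_lin_exp_lin_le c : 0 < c ->
  RInt (fun x => (1 - x) * exp (- c * (1 - x))) 0 1 <= 1 / c ^ 2.
Proof.
  intros hc.
  rewrite (is_RInt_unique _ _ _ _ (@is_RInt_derive R_CompleteNormedModule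
             (fun x => exp (- c * (1 - x)) * ((1 - x) / c + 1 / c ^ 2))
             (fun x => (1 - x) * exp (- c * (1 - x))) 0 1
             ltac:(intros; auto_derive; [auto | unify_exp_args; field; lra])
             ltac:(intros; apply (@ex_derive_continuous R_AbsRing R_NormedModule);
                   auto_derive; auto))).
  unfold minus, plus, opp; simpl. rewrite Rminus_diag, Rmult_0_r, exp_0, Rminus_0_r.
  assert (0 <= exp (- c * 1) * (1 / c + 1 / (c * (c * 1)))).
  { apply Rmult_le_pos; [apply Rlt_le, exp_pos|].
    apply Rplus_le_le_0_compat; apply Rlt_le, Rdiv_lt_0_compat; nra. }
  unfold Rdiv at 1. rewrite Rmult_0_l. lra.
Qed.

Definition kernel (s b x : R) : R := exp (- s * (b * (1 - x) - (1 - x) ^ 2)).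

Definition kernel_integral (s b : R) : R := RInt (kernel s b) 0 1.

Lemma ex_RInt_kernel s b : ex_RInt (kernel s b) 0 1.
Proof. unfold kernel. ex_RInt_by_smoothness. Qed.

Lemma exp_lin_le_kernel s b x : 0 <= s -> exp (- (s * b) * (1 - x)) <= kernel s b x.
Proof.
  intros hs. unfold kernel. apply exp_le_exp_of_le.
  pose proof (pow2_ge_0 (1 - x)). nra.
Qed.

Lemma RInt_kernel_deriv s b :
  RInt (fun x => s * (b - 2 * (1 - x)) * kernel s b x) 0 1 = 1 - exp (- s * (b - 1)).
Proof.
  rewrite (is_RInt_unique _ _ _ _ (@is_RInt_derive R_CompleteNormedModule
             (kernel s b) (fun x => s * (b - 2 * (1 - x)) * kernel s b x) 0 1
             ltac:(intros; unfold kernel; auto_derive; [auto | unify_exp_args; ring])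
             ltac:(intros; apply (@ex_derive_continuous R_AbsRing R_NormedModule);
                   unfold kernel; auto_derive; auto))).
  assert (k1 : kernel s b 1 = 1) by (unfold kernel; rewrite <- exp_0; f_equal; ring).
  assert (k0 : kernel s b 0 = exp (- s * (b - 1))) by (unfold kernel; f_equal; ring).
  unfold minus, plus, opp; simpl. rewrite k1, k0. ring.
Qed.

Lemma kernel_integral_ge s b : 0 < s -> 1 <= b -> 1 - / s <= s * b * kernel_integral s b.
Proof.
  intros hs hb.
  assert (hlin : RInt (fun x => exp (- (s * b) * (1 - x))) 0 1 <= kernel_integral s b).
  { apply RInt_le; [lra | ex_RInt_by_smoothness | apply ex_RInt_kernel |].
    intros x _. apply exp_lin_le_kernel. lra. }
  assert (hsb : 0 < s * b) by nra.
  pose proof (RInt_exp_lin_ge (s * b) hsb).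
  assert (/ (s * b) <= / s) by (apply Rinv_le_contravar; nra).
  apply (Rmult_le_compat_l (s * b)) in hlin; lra.
Qed.

Lemma kernel_integral_le s b : 0 < s -> 1 < b ->
  s * b * kernel_integral s b <= 1 + 2 / (s * (b - 1) ^ 2).
Proof.
  intros hs hb.
  set (J := RInt (fun x => (1 - x) * kernel s b x) 0 1).
  assert (hJex : ex_RInt (fun x => (1 - x) * kernel s b x) 0 1)
    by (unfold kernel; ex_RInt_by_smoothness).
  assert (hsplit : RInt (fun x => s * (b - 2 * (1 - x)) * kernel s b x) 0 1
                   = s * b * kernel_integral s b - 2 * s * J).
  { assert (hpt : forall x, s * (b - 2 * (1 - x)) * kernel s b x
                            = s * b * kernel s b x - 2 * s * ((1 - x) * kernel s b x)) by (intros; ring).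
    rewrite (RInt_ext _ _ 0 1 (fun x _ => hpt x)).
    rewrite (RInt_minus_R (fun x => s * b * kernel s b x) (fun x => 2 * s * ((1 - x) * kernel s b x)))
      by (unfold kernel; ex_RInt_by_smoothness).
    unfold kernel_integral, J.
    rewrite <- (RInt_mult_l (s * b)) by apply ex_RInt_kernel.
    rewrite <- (RInt_mult_l (2 * s)) by exact hJex.
    reflexivity. }
  assert (hJ : J <= RInt (fun x => (1 - x) * exp (- (s * (b - 1)) * (1 - x))) 0 1).
  { apply RInt_le; [lra | exact hJex | ex_RInt_by_smoothness |].
    intros x hx. apply Rmult_le_compat_l; [lra|]. unfold kernel. apply exp_le_exp_of_le.
    assert (0 <= s * (1 - x) * x) by (apply Rmult_le_pos; [apply Rmult_le_pos|]; lra). nra. }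
  pose proof (RInt_lin_exp_lin_le (s * (b - 1)) ltac:(nra)).
  pose proof (RInt_kernel_deriv s b). pose proof (exp_pos (- s * (b - 1))).
  replace (2 / (s * (b - 1) ^ 2)) with (2 * s * (1 / (s * (b - 1)) ^ 2)) by (field; nra).
  nra.
Qed.

Lemma kernel_integral_asymptotics s b : 0 < s -> 1 < b ->
  Rabs (s * b * kernel_integral s b - 1) <= (1 + 2 / (b - 1) ^ 2) / s.
Proof.
  intros hs hb. apply Rabs_le_between'.
  pose proof (kernel_integral_ge s b hs ltac:(lra)). pose proof (kernel_integral_le s b hs hb).
  replace ((1 + 2 / (b - 1) ^ 2) / s) with (/ s + 2 / (s * (b - 1) ^ 2)) by (field; nra).
  assert (0 <= 2 / (s * (b - 1) ^ 2))
    by (apply Rlt_le, Rdiv_lt_0_compat; [lra | apply Rmult_lt_0_compat; [lra | apply pow_lt; lra]]).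
  pose proof (Rinv_0_lt_compat s hs). lra.
Qed.

Lemma RInt_exp_sqr_opp y :
  RInt (fun z => exp (z ^ 2)) 0 (- y) = - y * exp (y ^ 2) * kernel_integral (y ^ 2) 2.
Proof.
  pose proof (RInt_comp_lin (fun z => exp (z ^ 2)) (- y) 0 0 1
                ltac:(ex_RInt_by_smoothness)) as hsub.
  rewrite Rmult_0_r, Rmult_1_r, !Rplus_0_r in hsub. rewrite <- hsub.
  unfold kernel_integral.
  rewrite Rmult_assoc, <- (RInt_mult_l (exp (y ^ 2))) by apply ex_RInt_kernel.
  rewrite <- RInt_mult_l by (unfold kernel; ex_RInt_by_smoothness).
  apply RInt_ext. intros x _. unfold scal; simpl; unfold mult; simpl.
  unfold kernel. rewrite <- exp_plus. f_equal. f_equal. ring.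
Qed.

Lemma ex_RInt_integrand t a : 0 < a -> ex_RInt (integrand t a) 0 1.
Proof.
  intros ha. apply (@ex_RInt_continuous R_CompleteNormedModule).
  rewrite Rmin_left, Rmax_right by lra. intros z hz. unfold integrand.
  destruct (Req_dec z 0) as [-> | hz0].
  - apply (continuous_comp (fun x => - t * x * ln (a * x)) exp).
    + apply (continuous_ext (fun x => - t * (x * ln (a * x)))); [intros; simpl; ring|].
      apply (@continuous_mult R_UniformSpace R_AbsRing); [apply continuous_const|].
      now apply continuous_xlnax_0.
    + apply (@ex_derive_continuous R_AbsRing R_NormedModule). auto_derive. auto.
  - apply (@ex_derive_continuous R_AbsRing R_NormedModule). auto_derive.
    repeat split; auto. nra.
Qed.

Lemma integrand_bounds s a x : 0 < a -> 0 <= s -> 0 < x ->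
  exp (s * ln a) * exp (- (s * (1 + ln a)) * (1 - x)) <= integrand (- s) a x
  <= exp (s * ln a) * kernel s (1 + ln a) x.
Proof.
  intros ha hs hx. unfold integrand, kernel. rewrite <- !exp_plus, ln_mult by lra.
  pose proof (xlnx_ge x hx). pose proof (xlnx_le x hx).
  split; apply exp_le_exp_of_le; nra.
Qed.

Lemma RInt_integrand_bounds s a : 0 < a -> 0 <= s ->
  exp (s * ln a) * RInt (fun x => exp (- (s * (1 + ln a)) * (1 - x))) 0 1
  <= RInt (integrand (- s) a) 0 1 <= exp (s * ln a) * kernel_integral s (1 + ln a).
Proof.
  intros ha hs. unfold kernel_integral. split.
  - rewrite <- RInt_mult_l by ex_RInt_by_smoothness.
    apply RInt_le; [lra | ex_RInt_by_smoothness | now apply ex_RInt_integrand |].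
    intros x hx. apply (integrand_bounds s a x ha hs). lra.
  - rewrite <- RInt_mult_l by apply ex_RInt_kernel.
    apply RInt_le; [lra | now apply ex_RInt_integrand | unfold kernel; ex_RInt_by_smoothness |].
    intros x hx. apply (integrand_bounds s a x ha hs). lra.
Qed.

Lemma approx_eq t a : t <= 0 ->
  approx t a = - (1 + ln a) * - t * exp (- t * ln a) * kernel_integral ((1 + ln a) ^ 2 * - t / 2) 2.
Proof.
  intros ht. set (b := 1 + ln a). set (r := sqrt (- t / 2)).
  assert (hr : r * r = - t / 2) by (apply sqrt_sqrt; lra).
  unfold approx, erfi, Rpower. fold b r.
  replace (- b * r) with (- (b * r)) by ring. rewrite RInt_exp_sqr_opp.
  replace ((b * r) ^ 2) with (b ^ 2 * - t / 2) by (replace (- t) with (2 * (r * r)) by lra; field).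
  replace (- PI * t / 2) with (PI * (- t / 2)) by field.
  rewrite sqrt_mult by (try apply Rlt_le, PI_RGT_0; lra). fold r.
  replace (t * b ^ 2 / 2) with (- (b ^ 2 * - t / 2)) by field. rewrite exp_Ropp.
  pose proof (sqrt_lt_R0 PI PI_RGT_0). pose proof (exp_pos (b ^ 2 * - t / 2)).
  replace (- b * - t) with (- b * (2 * (r * r))) by (rewrite hr; field).
  field. lra.
Qed.

Definition fta_leading (t a : R) : R := - exp (- t * ln a) / (1 + ln a).

Lemma Rabs_fta_leading t a : 1 < a -> Rabs (fta_leading t a) = exp (- t * ln a) / (1 + ln a).
Proof.
  intros ha. pose proof (ln_pos a ha). pose proof (exp_pos (- t * ln a)).
  unfold fta_leading. rewrite Rabs_left; [field; lra | apply Rdiv_neg_pos; lra].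
Qed.

Lemma fta_leading_neq0 t a : 1 < a -> fta_leading t a <> 0.
Proof.
  intros ha h. pose proof (Rabs_fta_leading t a ha) as habs. rewrite h, Rabs_R0 in habs.
  pose proof (ln_pos a ha). pose proof (exp_pos (- t * ln a)).
  pose proof (Rdiv_lt_0_compat (exp (- t * ln a)) (1 + ln a)). lra.
Qed.

Lemma fta_leading_asymptotics a t : 1 < a -> t < 0 ->
  Rabs (fta t a / fta_leading t a - 1) <= (1 + 2 / ln a ^ 2) / - t.
Proof.
  intros ha ht. set (s := - t). replace t with (- s) by (unfold s; ring).
  assert (hs : 0 < s) by (unfold s; lra).
  pose proof (ln_pos a ha) as hL. set (b := 1 + ln a).
  set (E := exp (s * ln a)). assert (hE : 0 < E) by apply exp_pos.
  set (I := RInt (integrand (- s) a) 0 1).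
  set (lin := RInt (fun x => exp (- (s * b) * (1 - x))) 0 1).
  replace (fta (- s) a / fta_leading (- s) a) with (s * b * (I / E)).
  2:{ unfold fta, fta_leading, E, I. rewrite Ropp_involutive. fold b.
      change (fun x => integrand (- s) a x) with (integrand (- s) a).
      field. split; [unfold b; lra | apply Rgt_not_eq, exp_pos]. }
  destruct (RInt_integrand_bounds s a ltac:(lra) ltac:(lra)) as [hlo hhi].
  fold E I b lin in hlo, hhi.
  assert (hsb : 0 < s * b) by (unfold b; nra).
  pose proof (RInt_exp_lin_ge (s * b) hsb) as hlin. fold lin in hlin.
  pose proof (kernel_integral_le s b hs ltac:(unfold b; lra)).
  replace (b - 1) with (ln a) in * by (unfold b; ring).
  assert (hlo' : lin <= I / E) by (apply (Rmult_le_reg_l E); [lra | field_simplify; lra]).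
  assert (hhi' : I / E <= kernel_integral s b)
    by (apply (Rmult_le_reg_l E); [lra | field_simplify; lra]).
  apply (Rmult_le_compat_l (s * b)) in hlo', hhi'; try lra.
  assert (/ (s * b) <= / s) by (apply Rinv_le_contravar; unfold b; nra).
  pose proof (Rinv_0_lt_compat s hs).
  assert (0 <= 2 / (s * ln a ^ 2))
    by (apply Rlt_le, Rdiv_lt_0_compat; [lra | apply Rmult_lt_0_compat; [lra | apply pow_lt; lra]]).
  apply Rabs_le_between'.
  replace ((1 + 2 / ln a ^ 2) / s) with (/ s + 2 / (s * ln a ^ 2)) by (field; lra).
  lra.
Qed.

Lemma approx_leading_asymptotics a t : 1 < a -> t < 0 ->
  Rabs (approx t a / fta_leading t a - 1) <= 6 / - t.
Proof.
  intros ha ht. pose proof (ln_pos a ha). set (b := 1 + ln a).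
  set (sigma := b ^ 2 * - t / 2).
  assert (hsigma : - t / 2 <= sigma) by (unfold sigma, b; nra).
  replace (approx t a / fta_leading t a) with (sigma * 2 * kernel_integral sigma 2).
  2:{ rewrite approx_eq by lra. unfold fta_leading, sigma. fold b.
      pose proof (exp_pos (- t * ln a)). field. unfold b; lra. }
  eapply Rle_trans; [apply kernel_integral_asymptotics; lra|].
  replace (6 / - t) with (3 / (- t / 2)) by (field; lra).
  replace ((1 + 2 / (2 - 1) ^ 2) / sigma) with (3 / sigma) by (field; lra).
  apply Rmult_le_compat_l; [lra|]. apply Rinv_le_contravar; lra.
Qed.

Theorem mainTheorem6 (a : R) (ha : 1 < a) :
  is_lim (fun t => fta t a / approx t a) m_infty 1
  /\ exists c C : R, 0 < c /\ 0 < C /\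
       exists T : R, forall t : R, t < T -> C * exp (- c * t) <= Rabs (fta t a).
Proof.
  pose proof (ln_pos a ha).
  pose proof (is_lim_m_infty_of_rate _ _ _ (fun t => fta_leading_asymptotics a t ha)) as hf.
  pose proof (is_lim_m_infty_of_rate _ _ _ (fun t => approx_leading_asymptotics a t ha)) as happrox.
  split.
  - apply (is_lim_ext (fun t => (fta t a / fta_leading t a) / (approx t a / fta_leading t a))).
    { intros t. now apply Rdiv_div_common, fta_leading_neq0. }
    replace (Finite 1) with (Rbar_div 1 1) by (simpl; rewrite Rinv_1, Rmult_1_r; reflexivity).
    apply is_lim_div; [exact hf | exact happrox | injection; lra | exact I].
  - exists (ln a), (/ (2 * (1 + ln a))). split; [lra | split; [apply Rinv_0_lt_compat; lra|]].
    apply is_lim_spec in hf. destruct (hf (mkposreal (1 / 2) ltac:(lra))) as [T hT].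
    exists T. intros t ht.
    eapply Rle_trans; [| apply (Rabs_half_le_of_div_near_1 _ _ (fta_leading_neq0 t a ha)), hT, ht].
    rewrite Rabs_fta_leading by exact ha. right.
    replace (- ln a * t) with (- t * ln a) by ring. field. lra.
Qed.
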